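(* Let $k \ge 2$ be an integer, $h_k(x) = x + \left\lfloor \frac{x}{k-1} \right\rfloor + 1$ for non-negative integers $x$, and let $\mathcal{G}$ be the Grundy function of Maximum Nim with rule function $f(x)=\lfloor x/k \rfloor$. Then: (i) $h_k(x) = \left\lfloor \frac{h_k(x)}{k} \right\rfloor + x + 1$ for every non-negative integer $x$; (ii) $\mathcal{G}(h_k(x)) = \mathcal{G}(x)$ for every non-negative integer $x$; (iii) for every non-negative integer $m$ there exists a non-negative integer $x_0$ such that $\{x \in \mathbb{Z}_{\ge 0} : \mathcal{G}(x) = m\} = \{h_k^p(x_0) : p \in \mathbb{Z}_{\ge 0}\}$, where $h_k^p$ is the $p$-th functional iterate of $h_k$.
   Context: Maximum Nim with rule function $f(x)=\lfloor x/k\rfloor$: a position is a pile of $x \ge 0$ stones, and from $x$ one may move to $x-u$ for any integer $u$ with $1 \le u \le \lfloor x/k \rfloor$. The Grundy number is defined recursively by $\mathcal{G}(x) = \mathrm{mex}\{\mathcal{G}(x-u) : 1 \le u \le \lfloor x/k\rfloor\}$, where $\mathrm{mex}(S)$ is the least non-negative integer not in $S$. *)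

From mathcomp Require Import all_boot.
Set Implicit Arguments. Unset Strict Implicit. Unset Printing Implicit Defensive.

Definition mex (s : seq nat) : nat :=
  find (fun m => m \notin s) (iota 0 (size s).+1).

(* grundy_list k n = [:: G 0; G 1; ...; G (n-1)] for Maximum Nim with
   rule f(x) = floor(x/k): from x one may move to x-u, 1 <= u <= x %/ k. *)
Fixpoint grundy_list (k n : nat) : seq nat :=
  match n with
  | 0 => [::]
  | n'.+1 =>
      let l := grundy_list k n' in
      rcons l (mex [seq nth 0 l (n' - u) | u <- iota 1 (n' %/ k)])
  end.

Definition grundy (k x : nat) : nat := nth 0 (grundy_list k x.+1) x.

Definition h (k x : nat) : nat := x + x %/ (k - 1) + 1.

(** The window [x, h x) of length x %/ (k-1) + 1 always carries each Grundy
    value below its length exactly once.  Since h x %/ k = x %/ (k-1), the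
    moves from h x reach exactly [x+1, h x): every value of the window except
    G x, so G (h x) = G x.  The window then slides by one, and whenever
    (k-1) %| x+1 it also grows by one position, whose moves see the whole
    window, hence a brand new value.  So every position outside the image of h
    carries a value larger than all earlier ones, and each fibre of G is the
    h-orbit of its least element. *)
From mathcomp Require Import all_boot zify.

Set Implicit Arguments.
Unset Strict Implicit.
Unset Printing Implicit Defensive.

Lemma mex_least s m : (forall v, v < m -> v \in s) -> m \notin s -> mex s = m.
Proof.
move=> lt_in m_notin.
have m_le : m <= size s.
  rewrite -(size_iota 0 m) uniq_leq_size ?iota_uniq // => v.
  by rewrite mem_iota => /lt_in.
rewrite /mex -(subnKC (leqW m_le)) iotaD find_cat size_iota.
have -> : has (fun v => v \notin s) (iota 0 m) = false.
  by apply/hasPn => v; rewrite mem_iota negbK => /lt_in.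
by rewrite subSn //= m_notin addn0.
Qed.

Lemma iota_rcons m n : iota m n.+1 = rcons (iota m n) (m + n).
Proof. by rewrite -cats1 -addn1 iotaD. Qed.

Lemma mem_iota0 n v : (v \in iota 0 n) = (v < n).
Proof. by rewrite mem_iota add0n. Qed.

Section GrundyWindows.

Variable k : nat.

Lemma size_grundy_list n : size (grundy_list k n) = n.
Proof. by elim: n => //= n IHn; rewrite size_rcons IHn. Qed.

Lemma nth_grundy_list n x : x < n -> nth 0 (grundy_list k n) x = grundy k x.
Proof.
elim: n => // n IHn lt_x_n; rewrite /= nth_rcons size_grundy_list.
move: lt_x_n; rewrite ltnS leq_eqVlt => /predU1P[-> | x_lt_n].
  by rewrite ltnn eqxx /grundy /= nth_rcons size_grundy_list ltnn eqxx.
by rewrite x_lt_n IHn.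
Qed.

Lemma grundy_mex y :
  grundy k y = mex [seq grundy k (y - u) | u <- iota 1 (y %/ k)].
Proof.
rewrite /grundy /= nth_rcons size_grundy_list ltnn eqxx; congr mex.
apply/eq_in_map => u; rewrite mem_iota => /andP[u_gt0 u_le].
by apply: nth_grundy_list; have := leq_div y k; lia.
Qed.

Lemma mem_grundy_moves y :
  [seq grundy k (y - u) | u <- iota 1 (y %/ k)]
    =i [seq grundy k z | z <- iota (y - y %/ k) (y %/ k)].
Proof.
have := leq_div y k => div_le v; apply/mapP/mapP => -[z].
  by rewrite mem_iota => z_in ->; exists (y - z); rewrite ?mem_iota; lia.
rewrite mem_iota => z_in ->; exists (y - z); rewrite ?mem_iota; first lia.
by congr grundy; lia.
Qed.

Lemma grundy_least y m :
  let W := [seq grundy k z | z <- iota (y - y %/ k) (y %/ k)] in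
  (forall v, v < m -> v \in W) -> m \notin W -> grundy k y = m.
Proof.
move=> W lt_in m_notin; rewrite grundy_mex.
by apply: mex_least => [v /lt_in|]; rewrite mem_grundy_moves.
Qed.

Definition grundy_window a n :=
  perm_eq [seq grundy k z | z <- iota a n] (iota 0 n).

Lemma grundy_window_slide a n :
  grundy_window a n.+1 -> grundy k (a + n.+1) = grundy k a ->
  grundy_window a.+1 n.+1.
Proof.
move=> win G_end; apply: perm_trans win.
by rewrite iota_rcons map_rcons addSnnS G_end perm_rcons.
Qed.

Lemma grundy_window_grow a n :
  grundy_window a n -> grundy k (a + n) = n -> grundy_window a n.+1.
Proof.
rewrite /grundy_window !iota_rcons map_rcons add0n => win G_end.
by rewrite G_end perm_rcons perm_sym perm_rcons perm_cons perm_sym.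
Qed.

Lemma grundy_window_cons a n :
  grundy_window a n.+1 ->
  grundy k a < n.+1 /\
  [seq grundy k z | z <- iota a.+1 n]
    =i [pred v | (v < n.+1) && (v != grundy k a)].
Proof.
move=> win; have uniq_win := perm_uniq win; rewrite iota_uniq /= in uniq_win.
case/andP: uniq_win => G_notin _; have mem_win := perm_mem win.
split; first by rewrite -mem_iota0 -mem_win mem_head.
move=> v; rewrite inE -mem_iota0 -mem_win /= inE.
by case: eqVneq => [->|]; rewrite ?(negbTE G_notin) ?andbT.
Qed.

Lemma grundy_window_lt a n z :
  grundy_window a n -> a <= z < a + n -> grundy k z < n.
Proof.
move=> win z_in; rewrite -mem_iota0 -(perm_mem win).
by apply: map_f; rewrite mem_iota.
Qed.

Lemma grundy_window_cover a n v : grundy_window a n -> v < n ->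
  exists2 z, a <= z < a + n & grundy k z = v.
Proof.
rewrite -mem_iota0 => win; rewrite -(perm_mem win) => /mapP[z].
by rewrite mem_iota => z_in ->; exists z.
Qed.

Hypothesis k_ge2 : 1 < k.

Lemma h_addn x : h k x = x + (x %/ (k - 1)).+1.
Proof. by rewrite /h addn1 addnS. Qed.

Lemma h_divk x : h k x %/ k = x %/ (k - 1).
Proof.
have mod_lt : x %% (k - 1) < k - 1 by rewrite ltn_mod; lia.
rewrite /h; set q := x %/ (k - 1); set r := x %% (k - 1) in mod_lt *.
rewrite {1}(divn_eq x (k - 1)) -/q -/r.
have -> : q * (k - 1) + r + q + 1 = q * k + (r + 1) by nia.
by rewrite divnMDl ?divn_small; lia.
Qed.

Lemma h_succ x : h k x.+1 = (h k x).+1 + ((k - 1) %| x.+1).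
Proof. rewrite !h_addn divnS; lia. Qed.

Lemma h_succ_dvd x : (k - 1) %| x.+1 -> (h k x).+1 = (x %/ (k - 1)).+1 * k.
Proof.
move=> dvd_x1; have := divnK dvd_x1; rewrite divnS ?dvd_x1; last lia.
rewrite h_addn; nia.
Qed.

Lemma grundy_h_of_window x :
  grundy_window x (x %/ (k - 1)).+1 -> grundy k (h k x) = grundy k x.
Proof.
move=> /grundy_window_cons[G_lt mem_rest]; apply: grundy_least.
  rewrite h_divk {1}h_addn -addSnnS addnK => v v_lt.
  by rewrite mem_rest inE (ltn_trans v_lt G_lt) ltn_eqF.
by rewrite h_divk {1}h_addn -addSnnS addnK mem_rest inE eqxx andbF.
Qed.

Lemma grundy_h_succ_of_window x : (k - 1) %| x.+1 ->
  grundy_window x (x %/ (k - 1)).+1 ->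
  grundy k (h k x).+1 = (x %/ (k - 1)).+1.
Proof.
move=> dvd_x1 win; have G_h := grundy_h_of_window win.
set w := x %/ (k - 1) in win G_h *.
have moves_len : (h k x).+1 %/ k = w.+1 by rewrite h_succ_dvd // mulnK; lia.
have moves_start : (h k x).+1 - w.+1 = x.+1 by rewrite h_addn; lia.
have mem_moves : [seq grundy k z | z <- iota x.+1 w.+1] =i iota 0 w.+1.
  rewrite iota_rcons map_rcons addSnnS -h_addn G_h => v.
  by rewrite mem_rcons; exact: (perm_mem win v).
apply: grundy_least => [v|]; rewrite moves_len moves_start mem_moves.
  by rewrite mem_iota0.
by rewrite mem_iota0 ltnn.
Qed.

Lemma grundy_window_h x : grundy_window x (x %/ (k - 1)).+1.
Proof.
elim: x => [|x IHx].
  rewrite /grundy_window div0n /= (_ : grundy k 0 = 0) //.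
  by rewrite grundy_mex div0n.
have slid : grundy_window x.+1 (x %/ (k - 1)).+1.
  by apply: grundy_window_slide => //; rewrite -h_addn grundy_h_of_window.
rewrite divnS; last lia.
case dvd_x1: ((k - 1) %| x.+1); last by rewrite add0n.
apply: grundy_window_grow slid _.
by rewrite addSn -h_addn grundy_h_succ_of_window.
Qed.

Lemma grundy_h x : grundy k (h k x) = grundy k x.
Proof. exact: grundy_h_of_window (grundy_window_h x). Qed.

Lemma grundy_le_div z : grundy k z <= z %/ (k - 1).
Proof.
apply: grundy_window_lt (grundy_window_h z) _.
by rewrite leqnn addnS ltnS leq_addr.
Qed.

Lemma h_image_cases y :
  [\/ y = 0, exists x, y = h k x
    | exists2 x, (k - 1) %| x.+1 & y = (h k x).+1].
Proof.
elim: y => [|y [->|[x ->]|[x dvd_x1 ->]]]; first exact: Or31.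
- by apply: Or32; exists 0; rewrite h_addn div0n.
- case dvd_x1: ((k - 1) %| x.+1); first by apply: Or33; exists x.
  by apply: Or32; exists x.+1; rewrite h_succ dvd_x1 addn0.
- by apply: Or32; exists x.+1; rewrite h_succ dvd_x1 addn1.
Qed.

Lemma grundy_record_h_succ x z : (k - 1) %| x.+1 -> z <= h k x ->
  grundy k z < grundy k (h k x).+1.
Proof.
move=> dvd_x1 z_le; rewrite grundy_h_succ_of_window ?grundy_window_h // ltnS.
case: (ltnP z x) => [/ltnW z_le_x | x_le_z].
  exact: leq_trans (grundy_le_div z) (leq_div2r _ z_le_x).
case: (ltngtP z (h k x)) z_le => // [z_lt _ | -> _].
  rewrite -ltnS; apply: grundy_window_lt (grundy_window_h x) _.
  by rewrite -h_addn x_le_z.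
by rewrite grundy_h grundy_le_div.
Qed.

Lemma h_image_or_record y :
  (exists x, y = h k x) \/ (forall z, z < y -> grundy k z < grundy k y).
Proof.
case: (h_image_cases y) => [->|im|[x dvd_x1 ->]]; [by right|by left|right].
by move=> z; rewrite ltnS; apply: grundy_record_h_succ.
Qed.

Lemma grundy_fibre m : exists x0 : nat,
  forall x : nat, grundy k x = m <-> exists p : nat, x = iter p (h k) x0.
Proof.
have fibre_nonempty : exists z, grundy k z == m.
  have [|z _ <-] := @grundy_window_cover _ _ m (grundy_window_h (m * (k - 1))).
    by rewrite mulnK //; lia.
  by exists z.
case: (ex_minnP fibre_nonempty) => x0 /eqP G_x0 x0_min.
exists x0 => x; split=> [|[p ->]]; last first.
  by elim: p => //= p <-; rewrite grundy_h.
elim/ltn_ind: x => x IHx G_x.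
case: (h_image_or_record x) => [[y x_eq]|record].
  have [p y_eq] : exists p, y = iter p (h k) x0.
    apply: IHx; last by rewrite -grundy_h -x_eq.
    by rewrite x_eq h_addn addnS ltnS leq_addr.
  by exists p.+1; rewrite x_eq y_eq iterS.
exists 0; have := x0_min x (introT eqP G_x).
by rewrite leq_eqVlt => /predU1P[//|/record]; rewrite G_x G_x0 ltnn.
Qed.

End GrundyWindows.

Theorem proposition1 (k : nat) (hk : 2 <= k) :
  (forall x : nat, h k x = h k x %/ k + x + 1) /\
  (forall x : nat, grundy k (h k x) = grundy k x) /\
  (forall m : nat, exists x0 : nat,
     forall x : nat, grundy k x = m <-> exists p : nat, x = iter p (h k) x0).
Proof.
split; first by move=> x; rewrite h_divk // /h; lia.
by split=> [x | m]; [exact: grundy_h | exact: grundy_fibre].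
Qed.
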